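(* For $n\ge0$ and $k\ge1$, $$\left|\Pi_n\wr C_k(1^11^2,1^12^2,1^21^1)\right|=\sum_{i_1+i_2+\dots+i_k=n}B(i_1)B(i_2)\cdots B(i_k),$$ where the sum is over all $k$-tuples of nonnegative integers $(i_1,\dots,i_k)$ with sum $n$ and $B(m)$ is the $m$th Bell number.
   Context: For $n\ge0$ let $[n]=\{1,\dots,n\}$. A $k$-colored set partition of $[n]$ is a set partition of $[n]$ together with an assignment of a color from $[k]$ to each element; $\Pi_n\wr C_k$ is the set of these. A colored partition $\sigma$ contains a two-element colored pattern in the pattern sense according to the following: $\sigma$ contains $1^11^2$ iff there are $i<j$ in the same block with color of $i$ strictly less than color of $j$; $\sigma$ contains $1^21^1$ iff there are $i<j$ in the same block with color of $i$ strictly greater than color of $j$; $\sigma$ contains $1^12^2$ iff there are $i<j$ in different blocks with color of $i$ strictly less than color of $j$. $\Pi_n\wr C_k(S)$ is the set of $\sigma\in\Pi_n\wr C_k$ containing none of the patterns in $S$. $B(m)$ is the number of set partitions of $[m]$, with $B(0)=1$. *)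

From mathcomp Require Import all_boot.
Set Implicit Arguments. Unset Strict Implicit. Unset Printing Implicit Defensive.

(* Conventions: [n] = {1..n} is modelled by 'I_n = {0..n-1} (order-preserving
   shift), colors [k] by 'I_k (order-preserving shift). *)

Definition set_partition (n : nat) (P : {set {set 'I_n}}) : bool :=
  partition P [set: 'I_n].

Definition bell (m : nat) : nat :=
  #|[set P : {set {set 'I_m}} | set_partition P]|.

Definition same_block (n : nat) (P : {set {set 'I_n}}) (i j : 'I_n) : bool :=
  [exists B in P, (i \in B) && (j \in B)].

Definition contains_11_12 n k (P : {set {set 'I_n}}) (c : {ffun 'I_n -> 'I_k}) :=
  [exists i : 'I_n, exists j : 'I_n,
     [&& i < j, same_block P i j & c i < c j]].

Definition contains_12_11 n k (P : {set {set 'I_n}}) (c : {ffun 'I_n -> 'I_k}) :=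
  [exists i : 'I_n, exists j : 'I_n,
     [&& i < j, same_block P i j & c j < c i]].

Definition contains_11_22 n k (P : {set {set 'I_n}}) (c : {ffun 'I_n -> 'I_k}) :=
  [exists i : 'I_n, exists j : 'I_n,
     [&& i < j, ~~ same_block P i j & c i < c j]].

Definition avoiders (n k : nat) :
  {set {set {set 'I_n}} * {ffun 'I_n -> 'I_k}} :=
  [set x | [&& set_partition x.1,
              ~~ contains_11_12 x.1 x.2,
              ~~ contains_11_22 x.1 x.2 &
              ~~ contains_12_11 x.1 x.2]].

From mathcomp Require Import all_boot zify.
Set Implicit Arguments. Unset Strict Implicit. Unset Printing Implicit Defensive.

(* Avoiding 1^1 1^2 and 1^1 2^2 means that colors never increase along [n];
   avoiding 1^2 1^1 as well then means that every block is monochromatic.  A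
   weakly decreasing coloring is determined by the sizes (i_1, ..., i_k) of its
   color classes, which can be any composition of n, and the partitions with
   monochromatic blocks are exactly the independent choices of a partition of
   each color class, of which there are B(i_1) ... B(i_k). *)

Lemma card_partitions (T : finType) (A : {set T}) :
  #|[set Q : {set {set T}} | partition Q A]| = bell #|A|.
Proof.
pose h := @enum_val T (mem A).
have h_inj : injective h by apply: enum_val_inj.
have h_onto : h @: setT = A.
  apply/setP=> x; apply/imsetP/idP => [[i _ ->]|xA]; first exact: enum_valP.
  by exists (enum_rank_in xA x) => //; rewrite /h enum_rankK_in.
rewrite /bell -(card_imset _ (imset_inj (imset_inj h_inj))).
apply: eq_card => Q; rewrite !inE; apply/idP/imsetP => [QA|[P]].
  have QE : [set h @: (B : {set _}) | B in [set h @^-1: (B : {set T}) | B in Q]] = Q.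
    rewrite -imset_comp -[RHS]imset_id; apply: eq_in_imset => B BQ /=.
    apply/setP => x; apply/imsetP/idP => [[y]|xB]; first by rewrite inE => hy ->.
    have xA : x \in A by apply: (subsetP (partitionS QA BQ)).
    by exists (enum_rank_in xA x); rewrite ?inE /h enum_rankK_in.
  exists [set h @^-1: (B : {set T}) | B in Q]; last by rewrite QE.
  by rewrite inE /set_partition -(imset_partition _ _ h_inj) QE h_onto.
rewrite inE /set_partition => PP ->.
by have := imset_partition P setT h_inj; rewrite PP h_onto.
Qed.

Definition monochromatic (T L : finType) (f : T -> L) (P : {set {set T}}) :=
  [forall B in P, exists l, B \subset f @^-1: [set l]].

Section MonochromaticPartitions.

Variables (T L : finType) (f : T -> L).

Local Notation fiber l := (f @^-1: [set l]).

Definition restrict_fiber (P : {set {set T}}) l := [set B in P | B \subset fiber l].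

Lemma fiber_color x (l : L) : x \in fiber l -> f x = l.
Proof. by rewrite !inE => /eqP. Qed.

Lemma monochromaticP (P : {set {set T}}) :
  reflect (forall B, B \in P -> exists l, B \subset fiber l) (monochromatic f P).
Proof.
apply: (iffP forallP) => [mP B BP|mP B]; first exact/existsP/(implyP (mP B)).
by apply/implyP => /mP/existsP.
Qed.

Lemma bigcup_restrict_fiber (P : {set {set T}}) :
  monochromatic f P -> \bigcup_l restrict_fiber P l = P.
Proof.
move/monochromaticP => mP; apply/setP => B; apply/bigcupP/idP => [[l _]|BP].
  by rewrite inE => /andP[].
by have [l Bl] := mP B BP; exists l; rewrite // inE BP.
Qed.

Lemma partition_restrict_fiber (P : {set {set T}}) l :
  partition P setT -> monochromatic f P -> partition (restrict_fiber P l) (fiber l).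
Proof.
move=> /and3P[/eqP covP trivP P0] /monochromaticP mP; apply/and3P; split.
- apply/eqP/setP => x; apply/bigcupP/idP => [[B]|xl].
    by rewrite inE => /andP[_ Bl] xB; apply: (subsetP Bl).
  have /bigcupP[B BP xB] : x \in cover P by rewrite covP inE.
  exists B => //; rewrite inE BP /=.
  have [l' Bl'] := mP B BP.
  by rewrite -(fiber_color xl) (fiber_color (subsetP Bl' x xB)).
- by apply: trivIsetS trivP; apply/subsetP => B; rewrite inE => /andP[].
- by rewrite inE negb_and P0.
Qed.

Section Gluing.

Variable g : L -> {set {set T}}.
Hypothesis g_part : forall l, partition (g l) (fiber l).

Lemma monochromatic_bigcup : monochromatic f (\bigcup_l g l).
Proof.
apply/monochromaticP => B /bigcupP[l _ Bl].
by exists l; apply: (partitionS (g_part l)).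
Qed.

Lemma partition_bigcup_fibers : partition (\bigcup_l g l) setT.
Proof.
apply/and3P; split.
- apply/eqP/setP => x; rewrite inE; apply/bigcupP.
  have /bigcupP[B Bg xB] : x \in cover (g (f x)).
    by rewrite (cover_partition (g_part (f x))) !inE.
  by exists B => //; apply/bigcupP; exists (f x).
- apply/trivIsetP => A B /bigcupP[la _ Aa] /bigcupP[lb _ Bb] AB.
  have [lab|la_lb] := eqVneq la lb.
    rewrite -lab in Bb.
    exact: (trivIsetP (partition_trivIset (g_part la))).
  apply/pred0P => x /=; apply/negP => /andP[xA xB]; move: la_lb.
  rewrite -(fiber_color (subsetP (partitionS (g_part la) Aa) x xA)).
  by rewrite (fiber_color (subsetP (partitionS (g_part lb) Bb) x xB)) eqxx.
- by apply/bigcupP => [[l _ gl0]]; move: (partition0 (g_part l)); rewrite gl0.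
Qed.

Lemma restrict_fiber_bigcup l : restrict_fiber (\bigcup_l' g l') l = g l.
Proof.
apply/setP => B; rewrite inE; apply/andP/idP => [[/bigcupP[l' _ Bl'] Bl]|Bl].
  have /set0Pn[x xB] := partition_neq0 (g_part l') Bl'.
  have Bl'_fiber := partitionS (g_part l') Bl'.
  by rewrite -(fiber_color (subsetP Bl x xB)) (fiber_color (subsetP Bl'_fiber x xB)).
by split; [apply/bigcupP; exists l | apply: (partitionS (g_part l))].
Qed.

End Gluing.

Lemma card_monochromatic_partitions :
  #|[set P : {set {set T}} | partition P setT && monochromatic f P]| =
  \prod_l #|[set Q : {set {set T}} | partition Q (fiber l)]|.
Proof.
pose parts l := [set Q : {set {set T}} | partition Q (fiber l)].
have parts_family g l : g \in family parts -> partition (g l) (fiber l).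
  by move=> /familyP/(_ l); rewrite inE.
have -> : \prod_l #|parts l| = #|family parts|.
  by rewrite card_family foldrE big_map big_enum.
pose restrict P := [ffun l => restrict_fiber P l].
rewrite -(card_in_imset (f := restrict)); last first.
  move=> P1 P2; rewrite !inE => /andP[_ m1] /andP[_ m2] /ffunP E12.
  rewrite -(bigcup_restrict_fiber m1) -(bigcup_restrict_fiber m2).
  by apply: eq_bigr => l _; have := E12 l; rewrite !ffunE.
apply: eq_card => g; apply/imsetP/idP => [[P]|g_fam].
  rewrite inE => /andP[PP mP] ->; apply/familyP => l.
  by rewrite ffunE inE partition_restrict_fiber.
have g_part l := parts_family g l g_fam.
exists (\bigcup_l g l).
  by rewrite inE partition_bigcup_fibers ?monochromatic_bigcup.
by apply/ffunP => l; rewrite ffunE restrict_fiber_bigcup.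
Qed.

End MonochromaticPartitions.

Definition weakly_decreasing n k (c : {ffun 'I_n -> 'I_k}) :=
  [forall i : 'I_n, forall j : 'I_n, (i < j) ==> (c j <= c i)].

Section Avoidance.

Variables (n k : nat) (P : {set {set 'I_n}}) (c : {ffun 'I_n -> 'I_k}).

Lemma weakly_decreasingP :
  reflect (forall i j : 'I_n, i < j -> c j <= c i) (weakly_decreasing c).
Proof.
apply: (iffP forallP) => [dc i j|dc i]; first exact/implyP/(forallP (dc i)).
by apply/forallP => j; apply/implyP/dc.
Qed.

Lemma avoid_ascentsE :
  (~~ contains_11_12 P c && ~~ contains_11_22 P c) = weakly_decreasing c.
Proof.
apply/andP/weakly_decreasingP => [[no12 no22] i j ij|dc].
  rewrite leqNgt; apply/negP => cij.
  case sb: (same_block P i j); [move/negP: no12 | move/negP: no22];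
    by apply; apply/existsP; exists i; apply/existsP; exists j; rewrite ij sb cij.
by split; apply/negP => /existsP[i /existsP[j /and3P[ij _]]];
  rewrite ltnNge dc.
Qed.

Lemma avoid_descents_in_blocksE : partition P setT -> weakly_decreasing c ->
  ~~ contains_12_11 P c = monochromatic c P.
Proof.
move=> PP /weakly_decreasingP dc; apply/idP/monochromaticP => [no_desc B BP|mP].
  have /set0Pn[x xB] := partition_neq0 PP BP.
  have c_const a b : a \in B -> b \in B -> a < b -> c a = c b.
    move=> aB bB ab; apply/val_inj/eqP; rewrite eqn_leq (dc a b ab) andbT leqNgt.
    apply: contra no_desc => cba; apply/existsP; exists a; apply/existsP; exists b.
    by rewrite ab cba andbT; apply/existsP; exists B; rewrite BP aB bB.
  exists (c x); apply/subsetP => y yB; rewrite !inE.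
  case: (ltngtP x y) => [xy|yx|/val_inj->] //.
  - by rewrite (c_const x y).
  - by rewrite (c_const y x).
apply/negP => /existsP[i /existsP[j /and3P[_ /existsP[B /andP[BP /andP[iB jB]]]]]].
have [l Bl] := mP B BP.
by rewrite (fiber_color (subsetP Bl i iB)) (fiber_color (subsetP Bl j jB)) ltnn.
Qed.

End Avoidance.

Lemma card_ord_ltn k m : #|[set i : 'I_k | i < m]| = minn m k.
Proof.
rewrite -sum1_card (eq_bigl (fun i : 'I_k => i < m)); last by move=> i; rewrite inE.
rewrite big_mkcond /= -(big_mkord xpredT (fun i => if i < m then 1 else 0)).
elim: k => [|k IHk]; first by rewrite big_nil; lia.
by rewrite big_nat_recr //= IHk; case: ltnP; lia.
Qed.

Lemma mem_downset k (A : {set 'I_k}) :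
  (forall x y : 'I_k, x <= y -> y \in A -> x \in A) ->
  forall x : 'I_k, (x \in A) = (x < #|A|).
Proof.
move=> A_down x; apply/idP/idP => [xA|].
  have : #|[set y : 'I_k | y < x.+1]| <= #|A|.
    by apply/subset_leq_card/subsetP => y; rewrite inE ltnS => /A_down; apply.
  by rewrite card_ord_ltn; have := ltn_ord x; lia.
apply: contraLR => xA.
have : #|A| <= #|[set y : 'I_k | y < x]|.
  apply/subset_leq_card/subsetP => y yA; rewrite inE ltnNge.
  by apply: contra xA => /A_down; apply.
by rewrite card_ord_ltn; lia.
Qed.

Definition suffix_sum k (t : 'I_k -> nat) m := \sum_(l < k | m <= l) t l.

Section SuffixSums.

Variables (k : nat) (t : 'I_k -> nat).

Lemma suffix_sum0 : suffix_sum t 0 = \sum_l t l.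
Proof. by []. Qed.

Lemma suffix_sumS (l : 'I_k) : suffix_sum t l = t l + suffix_sum t l.+1.
Proof.
rewrite /suffix_sum (bigD1 l) //=; congr (_ + _).
by apply: eq_bigl => l'; rewrite ltn_neqAle andbC eq_sym.
Qed.

Lemma suffix_sum_out m : k <= m -> suffix_sum t m = 0.
Proof. by move=> km; rewrite /suffix_sum big_pred0 // => l; rewrite leqNgt (leq_trans _ km). Qed.

Lemma suffix_sum_le m : suffix_sum t m <= \sum_l t l.
Proof. by rewrite /suffix_sum [leqRHS](bigID (fun l : 'I_k => m <= l)) leq_addr. Qed.

Lemma suffix_sum_antitone m m' : m <= m' -> suffix_sum t m' <= suffix_sum t m.
Proof.
move=> mm'; rewrite /suffix_sum [leqRHS](bigID (fun l : 'I_k => m' <= l)) /=.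
apply: leq_trans (leq_addr _ _); rewrite leq_eqVlt; apply/orP; left.
by apply/eqP/eq_bigl => l; apply/esym/andb_idl => /(leq_trans mm').
Qed.

End SuffixSums.

Lemma suffix_sum_inj k (t t' : 'I_k -> nat) :
  (forall m, suffix_sum t m = suffix_sum t' m) -> forall l, t l = t' l.
Proof.
move=> E l; apply/eqP; rewrite -(eqn_add2r (suffix_sum t l.+1)).
by rewrite -suffix_sumS !E suffix_sumS.
Qed.

Definition color_count n k (c : {ffun 'I_n -> 'I_k}) (l : 'I_k) := #|[set i | c i == l]|.

Definition color_counts n k (c : {ffun 'I_n -> 'I_k}) : {ffun 'I_k -> 'I_n.+1} :=
  [ffun l => inord (color_count c l)].

Section Colorings.

Variables n k : nat.
Implicit Types c : {ffun 'I_n -> 'I_k}.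

Lemma color_countsE c l : color_counts c l = color_count c l :> nat.
Proof.
by rewrite ffunE inordK // ltnS -[leqRHS](card_ord n) max_card.
Qed.

Lemma card_color_ge c m : #|[set i | m <= c i]| = suffix_sum (color_count c) m.
Proof.
rewrite -sum1_card (eq_bigl (fun i => m <= c i)) => [|i]; last by rewrite inE.
rewrite (partition_big c (fun l : 'I_k => m <= l)) //; apply: eq_bigr => l ml.
rewrite /color_count -sum1_card; apply: eq_bigl => i; rewrite inE.
by case: eqP => [->|_]; rewrite ?ml ?andbF.
Qed.

Lemma sum_color_count c : \sum_l color_count c l = n.
Proof.
rewrite -suffix_sum0 -card_color_ge -[RHS](card_ord n).
by apply: eq_card => i; rewrite inE.
Qed.

Lemma weakly_decreasing_geE c : weakly_decreasing c ->
  forall m i, (m <= c i) = (i < #|[set j | m <= c j]|).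
Proof.
move=> /weakly_decreasingP dc m i; rewrite -mem_downset ?inE // => x y.
rewrite leq_eqVlt => /orP[/eqP/val_inj->|xy] //; rewrite !inE => my.
exact: leq_trans my (dc x y xy).
Qed.

Lemma weakly_decreasing_color_count_inj c c' :
  weakly_decreasing c -> weakly_decreasing c' ->
  (forall l, color_count c l = color_count c' l) -> c = c'.
Proof.
move=> dc dc' E; have E' m : #|[set j | m <= c j]| = #|[set j | m <= c' j]|.
  by rewrite !card_color_ge; apply: eq_bigr => l _; rewrite E.
have ge_ci m i : (m <= c i) = (m <= c' i).
  by rewrite (weakly_decreasing_geE dc) (weakly_decreasing_geE dc') E'.
apply/ffunP => i; apply/val_inj/eqP.
by rewrite eqn_leq ge_ci leqnn -ge_ci leqnn.
Qed.

End Colorings.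

Lemma weakly_decreasing_of_counts n k (t : 'I_k.+1 -> nat) : \sum_l t l = n ->
  exists2 c : {ffun 'I_n -> 'I_k.+1}, weakly_decreasing c &
    forall l, color_count c l = t l.
Proof.
move=> sum_t; pose U := suffix_sum t.
(* [c i] is the largest m with [i < U m]: the first [U m] points get the colors >= m. *)
pose X (i : 'I_n) := [set l : 'I_k.+1 | i < U l.+1].
have X_down i (x y : 'I_k.+1) : x <= y -> y \in X i -> x \in X i.
  by rewrite !inE => xy /leq_trans; apply; apply: suffix_sum_antitone.
have X_small i : #|X i| < k.+1.
  rewrite ltnS leqNgt -(mem_downset (X_down i) ord_max) inE.
  by rewrite /U suffix_sum_out.
pose c := [ffun i => inord #|X i| : 'I_k.+1].
have cE i : c i = #|X i| :> nat by rewrite ffunE inordK.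
have c_ge m i : (m <= c i) = (i < U m).
  case: m => [|l]; first by rewrite /U suffix_sum0 sum_t ltn_ord.
  have [lk|kl] := ltnP l k.+1.
    by rewrite cE -(mem_downset (X_down i) (Ordinal lk)) inE.
  have -> : U l.+1 = 0 by apply: suffix_sum_out; apply: ltnW.
  by rewrite cE; have := X_small i; lia.
exists c.
  apply/weakly_decreasingP => i j ij.
  by rewrite c_ge (ltn_trans ij) // -c_ge.
apply: suffix_sum_inj => m; rewrite -card_color_ge.
rewrite (eq_card (B := [set i : 'I_n | i < U m])) => [|i]; last by rewrite !inE c_ge.
by rewrite card_ord_ltn; apply/minn_idPl; rewrite -sum_t suffix_sum_le.
Qed.

Lemma color_counts_inj n k :
  {in [set c : {ffun 'I_n -> 'I_k} | weakly_decreasing c] &, injective (@color_counts n k)}.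
Proof.
move=> c c'; rewrite !inE => dc dc' E; apply: weakly_decreasing_color_count_inj => // l.
by rewrite -!color_countsE E.
Qed.

Lemma color_counts_image n k :
  @color_counts n k.+1 @: [set c : {ffun 'I_n -> 'I_k.+1} | weakly_decreasing c] =
  [set t : {ffun 'I_k.+1 -> 'I_n.+1} | \sum_l (t l : nat) == n].
Proof.
apply/setP => t; rewrite inE; apply/imsetP/eqP => [[c _ ->]|sum_t].
  by rewrite -[RHS](sum_color_count c); apply: eq_bigr => l _; rewrite color_countsE.
have [c dc ct] := weakly_decreasing_of_counts sum_t.
exists c; rewrite ?inE //; apply/ffunP => l; apply/val_inj => /=.
by rewrite color_countsE ct.
Qed.

Lemma card_set_pair (X Y : finType) (A : {set X * Y}) :
  #|A| = \sum_(y : Y) #|[set x | (x, y) \in A]|.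
Proof.
rewrite -sum1_card big_mkcond /=.
rewrite (eq_bigr (fun p => (fun x y => if (x, y) \in A then 1 else 0) p.1 p.2)) => [|[] //].
rewrite -(pair_bigA _ (fun x y => if (x, y) \in A then 1 else 0)) exchange_big.
by apply: eq_bigr => y _; rewrite -big_mkcond sum1_card; apply: eq_card => x; rewrite inE.
Qed.

Lemma card_avoiders_coloring n k (c : {ffun 'I_n -> 'I_k}) :
  #|[set P | (P, c) \in avoiders n k]| =
  if weakly_decreasing c then \prod_l bell (color_count c l) else 0.
Proof.
have -> : [set P | (P, c) \in avoiders n k] =
          [set P | partition P setT && (weakly_decreasing c && monochromatic c P)].
  apply/setP => P; rewrite !inE /= /set_partition.
  case PP: (partition P setT) => //=; rewrite andbA avoid_ascentsE.
  by case dc: (weakly_decreasing c); rewrite // avoid_descents_in_blocksE.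
case: (weakly_decreasing c); last by apply: eq_card0 => P; rewrite !inE andbF.
rewrite (eq_card (B := [set P | partition P setT && monochromatic c P])) => [|P].
  rewrite card_monochromatic_partitions; apply: eq_bigr => l _.
  by rewrite card_partitions; congr bell; apply: eq_card => i; rewrite !inE.
by rewrite !inE.
Qed.

Theorem mainTheorem19 (n k : nat) (hk : 1 <= k) :
  #|avoiders n k| =
  \sum_(t : {ffun 'I_k -> 'I_n.+1} | \sum_(l < k) (t l : nat) == n)
     \prod_(l < k) bell (t l).
Proof.
case: k hk => // k _.
rewrite card_set_pair (eq_bigr _ (fun c _ => card_avoiders_coloring c)) -big_mkcond /=.
rewrite -big_set -[RHS]big_set -color_counts_image big_imset; last exact: color_counts_inj.
by apply: eq_bigr => c _; apply: eq_bigr => l _; rewrite color_countsE.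
Qed.
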